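(* Let $p\ge 5$ be a prime and let $n$, $m$ and $s$ be nonnegative integers such that $n\ge m$ and $s\ge 1$. Let $r=\sum_{j=0}^{s-1}a_jp^j$ with integers $a_j$ such that $1\le a_0\le p-1$ and $0\le a_j\le p-1$ for all $j=1,\ldots,s-1$. Then \[ \binom{np^s}{mp^s+r}\equiv (m+1)\binom{n}{m+1}\binom{p^s}{r}\pmod{p^{s+1}}. \]
   Context: Binomial coefficients follow the convention $\binom{l}{t}=0$ if $l<t$ and $\binom{0}{0}=1$. *)

From mathcomp Require Import all_boot.

From mathcomp Require Import all_boot.
From mathcomp Require Import zify ring.

(* Let P = p ^ s and 0 < t < P with p not dividing t.  By Vandermonde,
   C((n+1)P, QP+t) = C(nP, QP+t) + C(nP, (Q-1)P+t) + sum of C(nP, j) C(P, QP+t-j)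
   over QP+t-P < j < QP+t, and the first two terms are handled by induction on n.
   In the window sum every term with j <> QP vanishes modulo p^(s+1): with
   i = QP+t-j, p divides at most one of i and j, and since neither is a multiple
   of P, the multiples j C(nP, j) and i C(P, i) of p^s force one binomial to carry
   p^s and the other a factor p.  The term
   j = QP is C(n, Q) C(P, t) modulo p^(s+1), because C(nP, QP) = C(n, Q) mod p and
   P divides C(P, t).  Pascal's rule then closes the induction; r satisfies the
   hypotheses on t since its lowest digit is nonzero. *)

Lemma dvdn_mul_bin n k : n %| k * 'C(n, k).
Proof.
by case: k => [|k]; rewrite ?mul0n ?dvdn0 // -mul_bin_diag dvdn_mulr.
Qed.

Section PrimePowerDivisibility.

Variables (p s : nat).
Hypothesis p_pr : prime p.

Lemma coprime_pexp x : ~~ (p %| x) -> coprime (p ^ s) x.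
Proof. by move=> px; apply: coprimeXl; rewrite prime_coprime. Qed.

Lemma pexp_dvdn_mulr {x y} : ~~ (p %| x) -> p ^ s %| x * y -> p ^ s %| y.
Proof. by move=> /coprime_pexp px; rewrite Gauss_dvdr. Qed.

Lemma prime_dvdn_mulr {x y} : ~~ (p ^ s %| x) -> p ^ s %| x * y -> p %| y.
Proof. by move=> psx; apply: contraLR => /coprime_pexp py; rewrite Gauss_dvdl. Qed.

Lemma prime_dvdn_bin_pexp i : 0 < i < p ^ s -> p %| 'C(p ^ s, i).
Proof.
case/andP=> i0 ilt; apply: (@prime_dvdn_mulr i); last exact: dvdn_mul_bin.
by rewrite gtnNdvd.
Qed.

Lemma pexp_dvdn_bin i : ~~ (p %| i) -> p ^ s %| 'C(p ^ s, i).
Proof. by move=> pi; apply: (pexp_dvdn_mulr pi); apply: dvdn_mul_bin. Qed.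

(* [j * C(N, j)] and [i * C(p ^ s, i)] are multiples of [p ^ s]; as [p] divides
   at most one of [i], [j], one binomial carries [p ^ s] and the other a factor [p]. *)
Lemma pexpS_dvdn_bin_mul N i j : p ^ s %| N -> ~~ (p %| i + j) ->
  ~~ (p ^ s %| i) -> ~~ (p ^ s %| j) -> p ^ s.+1 %| 'C(N, j) * 'C(p ^ s, i).
Proof.
move=> psN pij psi psj.
have psjN : p ^ s %| j * 'C(N, j) := dvdn_trans psN (dvdn_mul_bin N j).
have psiP : p ^ s %| i * 'C(p ^ s, i) := dvdn_mul_bin _ i.
have [pj|pj] := boolP (p %| j).
  have pi : ~~ (p %| i) by apply: contra pij => pi; apply: dvdn_add.
  by rewrite expnS dvdn_mul ?(prime_dvdn_mulr psj psjN) ?(pexp_dvdn_mulr pi psiP).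
by rewrite expnSr dvdn_mul ?(pexp_dvdn_mulr pj psjN) ?(prime_dvdn_mulr psi psiP).
Qed.

End PrimePowerDivisibility.

Lemma binD_split N P K : 0 < P ->
  'C(N + P, K) = 'C(N, K) + (P <= K) * 'C(N, K - P)
                 + \sum_(j < K | K - j < P) 'C(N, j) * 'C(P, K - j).
Proof.
move=> P_gt0; rewrite -Vandermonde big_ord_recr /= subnn bin0 muln1.
rewrite -addnA addnC; congr (_ + _).
rewrite (bigID (fun j : 'I_K => K - j < P)) /= addnC; congr (_ + _).
have [PleK|KltP] := leqP P K; last first.
  by apply: big1 => j; rewrite (leq_ltn_trans (leq_subr j K) KltP).
have KPltK : K - P < K by lia.
rewrite mul1n (bigD1 (Ordinal KPltK)) /= ?subKn ?binn ?muln1 ?ltnn //.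
rewrite big1 ?addn0 // => j /andP [Pj jne].
rewrite (@bin_small P) ?muln0 //; move: Pj; rewrite -leqNgt leq_eqVlt => /orP [/eqP PKj|//].
by move/eqP: jne; case; apply: val_inj => /=; lia.
Qed.

Lemma bin_muln_pexp_mod p s n q : prime p ->
  'C(n * p ^ s, q * p ^ s) = 'C(n, q) %[mod p].
Proof.
move=> p_pr; have P_gt0 : 0 < p ^ s by rewrite expn_gt0 prime_gt0.
elim: n q => [|n IHn] q.
  by rewrite !bin0n muln_eq0 (negPf (lt0n_neq0 P_gt0)) orbF.
rewrite mulSn addnC binD_split // -modnDmr.
have -> : (\sum_(j < q * p ^ s | q * p ^ s - j < p ^ s)
             'C(n * p ^ s, j) * 'C(p ^ s, q * p ^ s - j)) %% p = 0.
  apply/eqP; apply: dvdn_sum => j jlt; apply: dvdn_mull.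
  by apply: prime_dvdn_bin_pexp; rewrite // subn_gt0 ltn_ord jlt.
case: q => [|q]; first by rewrite leqNgt P_gt0 !bin0.
by rewrite leq_pmull // mul1n mulSn addKn addn0 -mulSn binS -modnDm !IHn modnDm.
Qed.

Lemma eqn_modMr_dvdn d P c x y : P %| c ->
  x = y %[mod d] -> x * c = y * c %[mod d * P].
Proof.
by move=> /dvdnP [c' ->] xy; rewrite !mulnA -!muln_modl -modnMml xy modnMml.
Qed.

Lemma modnD_congr {d m1 m2 n1 n2} :
  m1 = n1 %[mod d] -> m2 = n2 %[mod d] -> m1 + m2 = n1 + n2 %[mod d].
Proof. by move=> eq1 eq2; rewrite -modnDm eq1 eq2 modnDm. Qed.

Lemma dvdn_eq_trunc_div P j K : P %| j -> j <= K < j + P -> j = K %/ P * P.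
Proof.
case/dvdnP=> j' ->; case/andP=> jK Kj; have P_gt0 : 0 < P by lia.
by rewrite -(subnKC jK) divnMDl // divn_small ?addn0 //; lia.
Qed.

Section BinomialPrimePowerCongruence.

Variables (p s t : nat).
Hypotheses (p_pr : prime p) (t_gt0 : 0 < t) (t_lt : t < p ^ s) (p_ndvd_t : ~~ (p %| t)).
Local Notation P := (p ^ s).

Lemma sum_bin_window_mod n Q :
  \sum_(j < Q * P + t | Q * P + t - j < P) 'C(n * P, j) * 'C(P, Q * P + t - j)
    = 'C(n, Q) * 'C(P, t) %[mod p ^ s.+1].
Proof.
set K := Q * P + t; have QPltK : Q * P < K by rewrite /K; lia.
have KQP : K - Q * P = t by rewrite /K addKn.
have p_dvd_P : p %| P.
  by case: s t_lt => [|s'] tP; [rewrite expn0 in tP; lia | rewrite expnS dvdn_mulr].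
rewrite (bigD1 (Ordinal QPltK)) /= KQP ?t_lt // -modnDmr.
have -> : (\sum_(j < K | (K - j < P) && (j != Ordinal QPltK))
             'C(n * P, j) * 'C(P, K - j)) %% p ^ s.+1 = 0.
  apply/eqP; apply: dvdn_sum => j /andP [jP jne].
  have jK : j <= K := ltnW (ltn_ord j).
  apply: pexpS_dvdn_bin_mul => //; first exact: dvdn_mull.
  - by rewrite subnK // /K dvdn_addr // dvdn_mull.
  - by rewrite gtnNdvd // subn_gt0.
  - have jwin : j <= K < j + P by rewrite jK /=; lia.
    apply: contra jne => /dvdn_eq_trunc_div/(_ jwin) eqj; apply/eqP/val_inj.
    by rewrite /= eqj divnMDl ?divn_small ?addn0 //; lia.
rewrite addn0 expnS.
by apply: eqn_modMr_dvdn; [apply: pexp_dvdn_bin | apply: bin_muln_pexp_mod].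
Qed.

Lemma bin_muln_pexp_addn_mod n Q :
  'C(n * P, Q * P + t) = (Q + 1) * 'C(n, Q + 1) * 'C(P, t) %[mod p ^ s.+1].
Proof.
elim: n Q => [|n IHn] Q.
  by rewrite !bin0n addn1 muln0 mul0n addn_eq0 (negPf (lt0n_neq0 t_gt0)) andbF.
have lower : (P <= Q * P + t) * 'C(n * P, Q * P + t - P)
               = Q * 'C(n, Q) * 'C(P, t) %[mod p ^ s.+1].
  case: Q => [|Q]; first by rewrite !mul0n add0n leqNgt t_lt.
  by rewrite mulSn -addnA leq_addr mul1n addKn IHn addn1.
rewrite mulSn addnC binD_split ?expn_gt0 ?prime_gt0 //.
rewrite (modnD_congr (modnD_congr (IHn Q) lower) (sum_bin_window_mod n Q)).
by rewrite addn1 binS; congr (_ %% _); ring.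
Qed.

End BinomialPrimePowerCongruence.

Lemma sum_digits_lt b k (a : nat -> nat) : (forall j, j < k -> a j < b) ->
  \sum_(0 <= j < k) a j * b ^ j < b ^ k.
Proof.
elim: k => [|k IHk] a_lt; first by rewrite big_geq.
rewrite big_nat_recr //= expnS.
have IH := IHk (fun j jk => a_lt j (ltnW jk)); have := a_lt k (ltnSn k); nia.
Qed.

Theorem corollary1p2 (p n m s : nat) (a : nat -> nat) :
  prime p -> 5 <= p -> m <= n -> 1 <= s ->
  1 <= a 0 <= p - 1 ->
  (forall j, 1 <= j <= s - 1 -> a j <= p - 1) ->
  let r := \sum_(0 <= j < s) a j * p ^ j in
  'C(n * p ^ s, m * p ^ s + r) = (m + 1) * 'C(n, m + 1) * 'C(p ^ s, r) %[mod p ^ s.+1].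
Proof.
move=> p_pr _ _ s_gt0 /andP [a0_gt0 a0_le] a_le r.
have p_gt0 := prime_gt0 p_pr.
have r_lt : r < p ^ s.
  by apply: sum_digits_lt => -[|j] js; [lia | have := a_le j.+1; lia].
have r_eq : r = a 0 + \sum_(1 <= j < s) a j * p ^ j.
  by rewrite /r big_ltn // expn0 muln1.
have p_dvd_tail : p %| \sum_(1 <= j < s) a j * p ^ j.
  rewrite big_nat_cond; apply: dvdn_sum => -[|j] /andP [/andP [j_gt0 _] _] //.
  by rewrite expnS mulnCA dvdn_mulr.
apply: bin_muln_pexp_addn_mod => //; first by rewrite r_eq; lia.
by rewrite r_eq dvdn_addl // gtnNdvd //; lia.
Qed.
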